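(* Let $G$ be a finite group and $X$ a finite $G$-poset. For $n\ge1$, $X^{(n)}/G$ is contractible if and only if $X'/G$ is contractible. If $X$ satisfies property (B), then $X^{(n)}/G$ is contractible if and only if $X/G$ is contractible.
   Context: Finite posets are regarded as finite $T_0$ topological spaces whose open sets are the down-sets; ''contractible'' refers to this topology. A finite $G$-poset is a finite poset with a right action of $G$ by order-preserving maps. $Y'$ is the poset of non-empty chains of $Y$ ordered by inclusion, $Y^{(n)}$ the $n$-th iterated subdivision. $Y/G$ is the orbit poset: $\overline{y}\le\overline{z}$ iff some representatives satisfy $y_1\le z_1$. $X$ satisfies property (B) if whenever $\{v_0,\dots,v_n\}$ and $\{v_0^{g_0},\dots,v_n^{g_n}\}$ are both chains of $X$ with $g_i\in G$, there is $g\in G$ with $v_i^{g_i}=v_i^g$ for all $i$. *)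

From HB Require Import structures.
From mathcomp Require Import all_boot all_order all_algebra all_fingroup.
From mathcomp Require Import all_classical all_reals.
From mathcomp Require Import topology normedtype Rstruct Rstruct_topology.

Set Implicit Arguments.
Unset Strict Implicit.
Unset Printing Implicit Defensive.


(* (The partial order axioms are imposed as hypotheses where needed; the      *)
(* topology below only uses the relation.)                                     *)
Record fposet := FPoset { pcarrier : finType ; ple : rel pcarrier }.

(* The finite T_0 space associated with a finite poset: open sets are the      *)
(* down-sets.                                                                   *)
Definition fspace (X : fposet) : Type := pcarrier X.
HB.instance Definition _ (X : fposet) := Choice.on (fspace X).

Definition downset (X : fposet) (U : set (fspace X)) :=
  forall x y : fspace X, ple y x -> U x -> U y.

Lemma downsetT (X : fposet) : downset [set: fspace X]%classic.
Proof. by []. Qed.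

Lemma downsetI (X : fposet) : setI_closed (@downset X).
Proof. by move=> A B hA hB x y yx [Ax Bx]; split; [exact: hA yx Ax|exact: hB yx Bx]. Qed.

Lemma downset_bigU (X : fposet) (I : Type) (f : I -> set (fspace X)) :
  (forall i, downset (f i)) -> downset (\bigcup_i f i)%classic.
Proof. by move=> hf x y yx [i _ hfx]; exists i => //; exact: hf yx hfx. Qed.

HB.instance Definition _ (X : fposet) :=
  isOpenTopological.Build (fspace X) (@downsetT X) (@downsetI X) (@downset_bigU X).

Section Contr.
Local Open Scope classical_set_scope.
Definition contractible (X : fposet) : Prop :=
  exists (x0 : fspace X) (H : fspace X * Rdefinitions.R -> fspace X),
    {within ([set: fspace X] `*` `[0%R, 1%R])%classic, continuous H} /\
    (forall x, H (x, 0%R) = x) /\ (forall x, H (x, 1%R) = x0).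
End Contr.

Record gposet (gT : finGroupType) := GPoset {
  gpos :> fposet ;
  gact : pcarrier gpos -> gT -> pcarrier gpos ;
  gact_mono : forall x y g, ple x y -> ple (gact x g) (gact y g) }.

Definition is_chain (X : fposet) (c : {set pcarrier X}) : bool :=
  [forall x in c, forall y in c, ple x y || ple y x].

Definition chain_pred (X : fposet) : pred {set pcarrier X} :=
  fun c => (c != finset.set0) && is_chain c.

Definition chains (X : fposet) : finType := {c : {set pcarrier X} | @chain_pred X c}.

Definition sd_poset (X : fposet) : fposet :=
  @FPoset (chains X) (fun c d => val c \subset val d).

Section SdAction.
Variables (gT : finGroupType) (X : gposet gT).

Lemma sd_act_chain (c : chains X) (g : gT) :
  @chain_pred X [set gact x g | x in val c].
Proof.
case: c => c /= /andP [c0 cc]; apply/andP; split.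
  case/set0Pn: c0 => x xc; apply/set0Pn; exists (gact x g); exact: imset_f.
apply/forallP => x'; apply/implyP => /imsetP [x xc ->].
apply/forallP => y'; apply/implyP => /imsetP [y yc ->].
have /forallP /(_ x) /implyP /(_ xc) /forallP /(_ y) /implyP /(_ yc) := cc.
by case/orP => h; apply/orP; [left|right]; exact: gact_mono.
Qed.

Definition sd_act (c : chains X) (g : gT) : chains X :=
  exist (fun d => @chain_pred X d) _ (sd_act_chain c g).

Lemma sd_act_mono (c d : chains X) (g : gT) :
  @ple (sd_poset X) c d -> @ple (sd_poset X) (sd_act c g) (sd_act d g).
Proof. by move=> /= cd; apply: imsetS. Qed.

Definition sd : gposet gT := @GPoset gT (sd_poset X) sd_act sd_act_mono.
End SdAction.

Fixpoint sdn (gT : finGroupType) (n : nat) (X : gposet gT) : gposet gT :=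
  if n is m.+1 then sd (sdn m X) else X.

Definition orbitG (gT : finGroupType) (X : gposet gT) (x : pcarrier X) :
  {set pcarrier X} := [set gact x g | g : gT].

Definition is_orbit (gT : finGroupType) (X : gposet gT) : pred {set pcarrier X} :=
  fun A => [exists x, A == orbitG x].

Definition orbits (gT : finGroupType) (X : gposet gT) : finType :=
  {A : {set pcarrier X} | @is_orbit gT X A}.

Definition orbit_poset (gT : finGroupType) (X : gposet gT) : fposet :=
  @FPoset (orbits X)
    (fun A B => [exists y in val A, exists z in val B, ple y z]).

Definition propB (gT : finGroupType) (X : gposet gT) : Prop :=
  forall (k : nat) (v : 'I_k -> pcarrier X) (gs : 'I_k -> gT),
    (forall i j, ple (v i) (v j) || ple (v j) (v i)) ->
    (forall i j, ple (gact (v i) (gs i)) (gact (v j) (gs j))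
                 || ple (gact (v j) (gs j)) (gact (v i) (gs i))) ->
    exists g : gT, forall i, gact (v i) (gs i) = gact (v i) g.

(* A finite T_0 space is contractible iff its identity is joined to a constant
   map by a fence of comparable order-preserving maps. Removing a beat point
   changes neither this property for X nor for its subdivision X', and when X
   has no beat point the closed chains (intersections of maximal chains) form
   a beat-free retract of X', so X' and X are then both contractible only if X
   is a point; hence X' is contractible iff X is. For a G-poset Y with property
   (B), sending an orbit of chains to its chain of orbits is an isomorphism
   from Y'/G onto (Y/G)'. Every subdivision has property (B), so X^(n+1)/G,
   being isomorphic to (X^(n)/G)', is contractible iff X^(n)/G is, for n >= 1,
   and for n = 0 under (B). *)

From Pilot Require Import Defs.
From HB Require Import structures.
From mathcomp Require Import all_boot all_order all_algebra all_fingroup.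
From mathcomp Require all_classical all_reals topology normedtype.
From mathcomp Require Rstruct Rstruct_topology lra.
From Stdlib Require Import FunctionalExtensionality Classical.

Set Implicit Arguments.
Unset Strict Implicit.
Unset Printing Implicit Defensive.

Definition partial_order (T : Type) (le : rel T) :=
  [/\ reflexive le, antisymmetric le & transitive le].

Lemma partial_order_flip (T : Type) (le : rel T) :
  partial_order le -> partial_order (fun x y => le y x).
Proof.
case=> lr la lt; split=> // [x y /andP [yx xy]|x y z yx zy].
- by apply: la; rewrite xy yx.
- exact: lt zy yx.
Qed.

(** * Fence homotopy *)

Section FenceHomotopy.
Variables (T : Type) (le : rel T).

Definition le_fun (f g : T -> T) := forall x, le (f x) (g x).

Definition comparable_fun (f g : T -> T) := le_fun f g \/ le_fun g f.

Lemma comparable_fun_sym f g : comparable_fun f g -> comparable_fun g f.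
Proof. by case; [right|left]. Qed.

Inductive homotopic (f : T -> T) : (T -> T) -> Prop :=
| homotopic_refl : {homo f : x y / le x y} -> homotopic f f
| homotopic_cons g h : homotopic f g -> {homo h : x y / le x y} ->
    comparable_fun g h -> homotopic f h.

Definition hcontractible := exists p : T, homotopic id (fun _ => p).

Lemma homotopic_homo f g :
  homotopic f g -> {homo f : x y / le x y} /\ {homo g : x y / le x y}.
Proof. by elim=> // g0 h _ [mf _] mh _. Qed.

Lemma homotopic_trans f g h : homotopic f g -> homotopic g h -> homotopic f h.
Proof. by move=> fg; elim=> // g0 h0 _ IH mh c; apply: homotopic_cons IH mh c. Qed.

Lemma homotopic_comparable f g : {homo f : x y / le x y} ->
  {homo g : x y / le x y} -> comparable_fun f g -> homotopic f g.
Proof. by move=> mf mg c; apply: homotopic_cons (homotopic_refl mf) mg c. Qed.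

Lemma homotopic_sym f g : homotopic f g -> homotopic g f.
Proof.
elim=> [mf|g0 h0 fg IH mh c]; first exact: homotopic_refl.
have [mf mg0] := homotopic_homo fg.
exact/(homotopic_trans _ IH)/homotopic_comparable/comparable_fun_sym.
Qed.

End FenceHomotopy.

Lemma homotopic_conj (T1 T2 : Type) (le1 : rel T1) (le2 : rel T2)
    (a : T1 -> T2) (b : T2 -> T1) :
    {homo a : x y / le1 x y >-> le2 x y} -> {homo b : x y / le2 x y >-> le1 x y} ->
  forall f g, homotopic le1 f g -> homotopic le2 (a \o f \o b) (a \o g \o b).
Proof.
move=> ma mb f g; have mc h : {homo h : x y / le1 x y} ->
    {homo a \o h \o b : x y / le2 x y} by move=> mh x y /mb /mh /ma.
elim=> [mf|g0 h0 _ IH mh c]; first exact/homotopic_refl/mc.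
apply: homotopic_cons IH (mc _ mh) _.
by case: c => c; [left|right] => x; apply: ma.
Qed.

Lemma hcontractible_retract (T1 T2 : Type) (le1 : rel T1) (le2 : rel T2)
    (r : T1 -> T2) (i : T2 -> T1) :
    {homo r : x y / le1 x y >-> le2 x y} -> {homo i : x y / le2 x y >-> le1 x y} ->
    cancel i r -> homotopic le1 (i \o r) id ->
  hcontractible le1 <-> hcontractible le2.
Proof.
move=> mr mi ir hri; split=> [[p hp]|[q hq]].
- exists (r p); have := homotopic_conj mr mi hp.
  by have -> : r \o id \o i = id by apply: functional_extensionality => x; apply: ir.
- exists (i q); apply: homotopic_trans (homotopic_sym hri) _.
  exact: homotopic_conj mi mr _ _ hq.
Qed.

Lemma homotopic_id (T : Type) (le : rel T) (f : T -> T) :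
  f =1 id -> homotopic le f id.
Proof.
by move=> /functional_extensionality ->; apply: homotopic_refl.
Qed.

(** * Finite spaces *)

Module FiniteSpace.
Import all_classical all_reals topology normedtype Rstruct Rstruct_topology lra.
Import Order.TTheory GRing.Theory Num.Theory.
Local Open Scope classical_set_scope.
Local Open Scope ring_scope.
Local Notation R := Rdefinitions.R.

Definition I01 : set R := `[0%R, 1%R].

Lemma I01E (s : R) : I01 s = (0 <= s <= 1).
Proof. by rewrite /I01 /= in_itv. Qed.

Lemma nbhs_realP (t : R) (B : set R) :
  nbhs t B <-> exists2 e : R, 0 < e & forall s, `|t - s| < e -> B s.
Proof.
split=> [/nbhs_ballP [e e0 h]|[e e0 h]]; first by exists e => // s /h.
by apply/nbhs_ballP; exists e => // s /h.
Qed.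

Lemma connected_locally_constant (T : topologicalType) (A : set T) (P : T -> Prop) :
    connected A -> (forall t, A t -> \forall s \near t, A s -> (P s <-> P t)) ->
  forall t0, A t0 -> P t0 -> forall t, A t -> P t.
Proof.
move=> conA Pnear t0 At0 Pt0; pose N t := [set s | A s -> (P s <-> P t)].
suff <- : A `&` P = A by move=> t [].
apply: conA; first by exists t0.
- exists (\bigcup_(t in A `&` P) interior (N t)).
    by apply: bigcup_open => t _; apply: open_interior.
  apply/seteqP; split=> [t [At Pt]|s [As [t [At Pt] /nbhs_singleton Nts]]].
    by split=> //; exists t => //; apply: Pnear.
  by split=> //; apply/(Nts As).
- exists (~` \bigcup_(t in A `&` ~` P) interior (N t)).
    by apply/open_closedC/bigcup_open => t _; apply: open_interior.
  apply/seteqP; split=> [t [At Pt]|s [As nPs]].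
    by split=> // -[u [Au nPu] /nbhs_singleton Nut]; apply/nPu/(Nut At).
  split=> //; apply: contrapT => nPs'.
  by apply: nPs; exists s => //; apply: Pnear.
Qed.

Section FiniteSpaceHomotopy.
Variable X : fposet.
Hypotheses (le_refl : reflexive (@ple X)) (le_trans : transitive (@ple X)).
Local Notation le := (@ple X).

Lemma open_principal_downset (x : fspace X) : open [set y : fspace X | le y x].
Proof. by move=> a b ba ax; apply: le_trans ba ax. Qed.

Lemma nbhs_fspace (x : fspace X) (A : set (fspace X)) :
  nbhs x A <-> [set y | le y x] `<=` A.
Proof.
rewrite nbhsE /=; split=> [[B [oB Bx] BA] y yx|h].
  exact/BA/(oB x y yx Bx).
by exists [set y | le y x] => //; split; [apply: open_principal_downset|apply: le_refl].
Qed.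

(* Since open sets are down-sets, continuity of [H] at [(x, t)] means that the *)
(* values of [H] near [t] at points below [x] stay below [H (x, t)].          *)
Definition locally_decreasing (H : fspace X * R -> fspace X) :=
  forall x t, I01 t -> exists2 e : R, 0 < e &
    forall y s, le y x -> I01 s -> `|t - s| < e -> le (H (y, s)) (H (x, t)).

Lemma continuous_locally_decreasingP H :
  {within [set: fspace X] `*` I01, continuous H} <-> locally_decreasing H.
Proof.
split=> [/subspace_continuousP hc x t t01|hl].
  have : nbhs (H (x, t)) [set z | le z (H (x, t))] by apply/nbhs_fspace.
  move=> /(hc (x, t) (conj I t01)) /= [[A B] /= [/nbhs_fspace nA /nbhs_realP [e e0 hB]] AB].
  by exists e => // y s yx s01 ts; apply: (AB (y, s)) => //; split; [apply: nA|apply: hB].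
apply/subspace_continuousP => -[x t] [_ t01] V /nbhs_fspace HV.
have [e e0 he] := hl x t t01.
exists ([set y | le y x], [set s | `|t - s| < e]) => /=.
  by split; [apply/nbhs_fspace|apply/nbhs_realP; exists e].
by move=> [y s] /= [yx ts] [_ s01]; apply/HV/he.
Qed.

Definition top_homotopic (f g : fspace X -> fspace X) := exists H,
  [/\ locally_decreasing H, forall x, H (x, 0) = f x & forall x, H (x, 1) = g x].

Lemma top_homotopic_refl f : {homo f : x y / le x y} -> top_homotopic f f.
Proof.
move=> mf; exists (fun q => f q.1); split=> // x t _.
by exists 1 => // y s yx _ _; apply: mf.
Qed.

Lemma top_homotopic_le f g : {homo f : x y / le x y} -> {homo g : x y / le x y} ->
  le_fun le f g -> top_homotopic f g.
Proof.
move=> mf mg fg; exists (fun q => if q.2 < 1 then f q.1 else g q.1).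
split=> [x t|x|x] /=; rewrite ?ltr01 ?ltxx //.
rewrite I01E => /andP [t0 t1]; case: (ltP t 1) => [t_lt1|_].
  exists (1 - t) => [|y s yx _]; first by rewrite subr_gt0.
  rewrite ltr_distlC => /andP [_ st]; have -> : s < 1 by lra.
  exact: mf.
exists 1 => // y s yx _ _; case: ifP => _; last exact: mg.
exact: le_trans (mf _ _ yx) (fg x).
Qed.

Lemma top_homotopic_sym f g : top_homotopic f g -> top_homotopic g f.
Proof.
case=> H [hl H0 H1]; exists (fun q => H (q.1, 1 - q.2)).
split=> [x t|x|x] /=; rewrite ?subr0 ?subrr //.
rewrite I01E => /andP [t0 t1]; have /(hl x) [e e0 he] : I01 (1 - t) by rewrite I01E; lra.
exists e => // y s yx; rewrite I01E => /andP [s0 s1] ts; apply: he => //.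
  by rewrite I01E; lra.
by move: ts; rewrite !ltr_distlC => /andP [? ?]; lra.
Qed.

Lemma top_homotopic_trans f g h :
  top_homotopic f g -> top_homotopic g h -> top_homotopic f h.
Proof.
case=> H1 [hl1 H10 H11] [H2 [hl2 H20 H21]].
exists (fun q => if q.2 <= 2^-1 then H1 (q.1, 2 * q.2) else H2 (q.1, 2 * q.2 - 1)).
split=> [x t|x|x] /=; last 2 first.
- by rewrite ifT ?mulr0 ?H10 //; lra.
- by rewrite ifF ?H21; [|lra]; have -> : (2 * 1 - 1 : R) = 1 by lra.
rewrite I01E => /andP [t0 t1]; case: (ltgtP t (2^-1)) => [t_lt|t_gt|->].
- have /(hl1 x) [e e0 he] : I01 (2 * t) by rewrite I01E; lra.
  exists (Num.min (e / 2) (2^-1 - t)) => [|y s yx]; first by rewrite lt_min; lra.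
  rewrite I01E lt_min !ltr_distlC => /andP [s0 s1] /andP [/andP [? ?] /andP [? ?]].
  have -> : s <= 2^-1 by lra.
  apply: he => //; first by rewrite I01E; lra.
  by rewrite ltr_distlC; lra.
- have /(hl2 x) [e e0 he] : I01 (2 * t - 1) by rewrite I01E; lra.
  exists (Num.min (e / 2) (t - 2^-1)) => [|y s yx]; first by rewrite lt_min; lra.
  rewrite I01E lt_min !ltr_distlC => /andP [s0 s1] /andP [/andP [? ?] /andP [? ?]].
  have -> : (s <= 2^-1) = false by apply/negbTE; rewrite -ltNge; lra.
  apply: he => //; first by rewrite I01E; lra.
  by rewrite ltr_distlC; lra.
- have /(hl1 x) [e1 e10 he1] : I01 1 by rewrite I01E ler01 lexx.
  have /(hl2 x) [e2 e20 he2] : I01 0 by rewrite I01E ler01 lexx.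
  exists (Num.min (e1 / 2) (e2 / 2)) => [|y s yx]; first by rewrite lt_min; lra.
  rewrite mulfV ?pnatr_eq0 // I01E lt_min !ltr_distlC.
  move=> /andP [s0 s1] /andP [/andP [? ?] /andP [? ?]].
  case: ifP => s_half.
    by apply: he1 => //; rewrite ?I01E ?ltr_distlC; lra.
  rewrite H11 -H20; apply: he2 => //; first by rewrite I01E; lra.
  by rewrite ltr_distlC; move/negbT: s_half; rewrite -ltNge; lra.
Qed.

Lemma homotopic_top_homotopic f g : homotopic le f g -> top_homotopic f g.
Proof.
elim=> [/top_homotopic_refl //|g0 h fg0 IH mh c]; apply: top_homotopic_trans IH _.
have [_ mg0] := homotopic_homo fg0.
case: c => [g0h|hg0]; first exact: top_homotopic_le.
exact/top_homotopic_sym/top_homotopic_le.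
Qed.

Lemma hcontractible_contractible : hcontractible le -> contractible X.
Proof.
case=> p /homotopic_top_homotopic [H [hl H0 H1]].
by exists p, H; split; [apply/continuous_locally_decreasingP|split].
Qed.

Lemma locally_decreasing_homo H t : locally_decreasing H -> I01 t ->
  {homo (fun x => H (x, t)) : x y / le x y}.
Proof.
move=> hl t01 x y xy; have [e e0 he] := hl y t t01.
by apply: he => //; rewrite subrr normr0.
Qed.

Lemma locally_decreasing_near H t : locally_decreasing H -> I01 t ->
  \forall s \near t, I01 s -> le_fun le (fun x => H (x, s)) (fun x => H (x, t)).
Proof.
move=> hl t01.
have : \forall s \near t, forall x : pcarrier X, I01 s -> le (H (x, s)) (H (x, t)).
  apply: (@filter_forall _ _ (fun x s => I01 s -> le (H (x, s)) (H (x, t)))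
    (nbhs t) _) => x.
  apply/nbhs_realP.
  have [e e0 he] := hl x t t01; exists e => // s ts s01.
  exact: he (le_refl x) s01 ts.
by apply: filterS => s hs s01 x; apply: hs.
Qed.

Lemma contractible_hcontractible : contractible X -> hcontractible le.
Proof.
case=> x0 [H [/continuous_locally_decreasingP hl [H0 H1]]]; exists x0.
pose Ht t x := H (x, t).
have -> : (fun _ => x0) = Ht 1 by apply: functional_extensionality => x; rewrite /Ht H1.
have I01_connected : connected I01 by apply/connected_intervalP/interval_is_interval.
apply: (@connected_locally_constant _ _ (fun t => homotopic le id (Ht t)) I01_connected
  _ 0); rewrite ?I01E ?ler01 ?lexx //.
- move=> t t01; apply: filterS (locally_decreasing_near hl t01) => s hs s01.
  have [ms mt] := (locally_decreasing_homo hl s01, locally_decreasing_homo hl t01).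
  split=> hid; first by apply: homotopic_cons hid mt _; left; apply: hs.
  by apply: homotopic_cons hid ms _; right; apply: hs.
- have -> : Ht 0 = id by apply: functional_extensionality => x; rewrite /Ht H0.
  exact: homotopic_refl.
Qed.

Lemma contractibleP : contractible X <-> hcontractible le.
Proof. by split; [apply: contractible_hcontractible|apply: hcontractible_contractible]. Qed.

End FiniteSpaceHomotopy.
End FiniteSpace.

(** * Chains and beat points *)

Section Chains.
Variable P : fposet.
Local Notation le := (@ple P).

Lemma chain_predP (c : {set pcarrier P}) :
  reflect (c != set0 /\ {in c &, forall x y, le x y || le y x}) (chain_pred c).
Proof.
apply: (iffP andP) => -[c0 cc]; split=> //.
  by move=> x y xc yc; move/forallP/(_ x): cc; rewrite xc => /forallP/(_ y); rewrite yc.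
apply/forallP => x; apply/implyP => xc; apply/forallP => y; apply/implyP.
exact: cc.
Qed.

Lemma chain_comparable (c : chains P) : {in val c &, forall x y, le x y || le y x}.
Proof. by have /chain_predP [] := valP c. Qed.

Lemma chain_neq0 (c : chains P) : val c != set0.
Proof. by have /chain_predP [] := valP c. Qed.

Lemma partial_order_sd : partial_order (@ple (sd_poset P)).
Proof.
split=> [c|c d|c d e] /=; [exact: subxx| |exact: subset_trans].
by rewrite -eqEsubset => /eqP/val_inj.
Qed.

Hypothesis le_refl : reflexive le.

Lemma chain_pred1 (v : pcarrier P) : chain_pred [set v].
Proof.
apply/chain_predP; split; first by apply/set0Pn; exists v; rewrite inE.
by move=> a b /set1P -> /set1P ->; rewrite le_refl.
Qed.

Definition chain1 (v : pcarrier P) : chains P := exist (@chain_pred P) _ (chain_pred1 v).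

End Chains.

Section ChainMap.
Variables (P Q : fposet) (f : pcarrier P -> pcarrier Q).
Hypothesis f_homo : {homo f : x y / @ple P x y >-> @ple Q x y}.

Lemma chain_pred_imset (c : chains P) : chain_pred [set f x | x in val c].
Proof.
apply/chain_predP; split.
  by case/set0Pn: (chain_neq0 c) => x xc; apply/set0Pn; exists (f x); apply: imset_f.
move=> _ _ /imsetP [x xc ->] /imsetP [y yc ->].
by case/orP: (chain_comparable xc yc) => /f_homo ->; rewrite ?orbT.
Qed.

Definition chain_map (c : chains P) : chains Q :=
  exist (@chain_pred Q) _ (chain_pred_imset c).

Lemma chain_map_homo :
  {homo chain_map : c d / @ple (sd_poset P) c d >-> @ple (sd_poset Q) c d}.
Proof. by move=> c d; apply: imsetS. Qed.

End ChainMap.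

Lemma chain_pred_max (P : fposet) (s : {set pcarrier P}) :
  partial_order (@ple P) -> chain_pred s -> exists2 m, m \in s & {in s, forall z, ple z m}.
Proof.
case=> lr la lt /chain_predP [/set0Pn [x0 xs] sc].
have [m ms mmax] := arg_maxnP (fun z => #|[set w | ple w z]|) xs.
exists m => // z zs; case/orP: (sc z m zs ms) => // mz.
have sub : [set w | ple w m] \subset [set w | ple w z].
  by apply/subsetP => w; rewrite !inE => /lt; apply.
have /eqP/setP/(_ z) : [set w | ple w m] == [set w | ple w z].
  by rewrite eqEcard sub; apply: mmax.
by rewrite !inE lr.
Qed.

Section BeatPoints.
Variables (T : finType) (le : rel T).

Definition beat (x y : T) :=
  x != y /\
  ((le y x /\ forall z, le z x -> z != x -> le z y) \/
   (le x y /\ forall z, le x z -> z != x -> le y z)).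

Definition beat_free := forall x y, ~ beat x y.

End BeatPoints.

Lemma beat_flip (T : finType) (le : rel T) x y :
  beat le x y -> beat (fun a b => le b a) x y.
Proof. by case=> nxy [] [h1 h2]; split=> //; [right|left]. Qed.

(* If [f] fixes every point below [x] and [f x <> x], then each [z < x] has *)
(* [z = f z <= f x], so [x] is a beat point dominated by [f x].             *)
Lemma beat_free_le_id (T : finType) (le : rel T) (f : T -> T) :
  partial_order le -> beat_free le -> {homo f : x y / le x y} ->
  le_fun le f id -> f = id.
Proof.
case=> lr la lt bf mf fle; apply: functional_extensionality.
suff H n x : #|[set z | le z x]| <= n -> f x = x by move=> x; apply: H _ _ (leqnn _).
elim: n x => [|n IH] x.
  by rewrite leqn0 => /eqP/cards0_eq/setP/(_ x); rewrite inE lr in_set0.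
move=> hc; apply/eqP/negPn/negP => fx.
apply: (bf x (f x)); split; first by rewrite eq_sym.
left; split=> [|z zx nzx]; first exact: fle.
suff <- : f z = z by apply: mf.
apply: IH; rewrite -ltnS; apply: leq_trans hc; apply/proper_card/properP.
split; first by apply/subsetP => w; rewrite !inE => /lt; apply.
exists x; rewrite !inE ?lr //; apply: contra nzx => xz.
by apply/eqP/la; rewrite zx xz.
Qed.

Section Stong.
Variables (T : finType) (le : rel T).
Hypothesis po : partial_order le.

Lemma beat_free_comparable_id (f : T -> T) : beat_free le -> {homo f : x y / le x y} ->
  comparable_fun le f id -> f = id.
Proof.
move=> bf mf [|fge]; first exact: beat_free_le_id.
apply: (@beat_free_le_id _ (fun a b => le b a)) => //.
- exact: partial_order_flip.
- by move=> x y /beat_flip; apply: bf.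
- by move=> x y; apply: mf.
Qed.

Lemma beat_free_homotopic_id (g : T -> T) : beat_free le -> homotopic le id g -> g = id.
Proof.
move=> bf; elim=> // g0 h _ ->{g0} mh c.
exact/(beat_free_comparable_id bf mh)/comparable_fun_sym.
Qed.

Lemma hcontractible_beat_freeP : beat_free le ->
  hcontractible le <-> exists p : T, forall x, x = p.
Proof.
case: (po) => lr _ _ bf; split=> [[p /(beat_free_homotopic_id bf) hp]|[p hp]].
  by exists p => x; rewrite -[x]/(id x) -hp.
exists p; have -> : (fun _ => p) = id by apply: functional_extensionality.
exact: homotopic_refl.
Qed.

End Stong.

Section RemoveBeatPoint.
Variables (P : fposet) (x y : pcarrier P).
Hypotheses (po : partial_order (@ple P)) (bxy : beat (@ple P) x y).
Local Notation T := (pcarrier P).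
Local Notation le := (@ple P).

Definition punctured : fposet := @FPoset {z : T | z != x} (fun a b => le (val a) (val b)).

Lemma partial_order_punctured : partial_order (@ple punctured).
Proof. by case: po => lr la lt; split=> [a|a b /la/val_inj|a b c] //=; apply: lt. Qed.

Lemma card_punctured : #|pcarrier punctured| < #|T|.
Proof.
rewrite card_sig; apply/proper_card/properP; split; first exact/subsetP.
by exists x; rewrite ?inE //= eqxx.
Qed.

Definition collapse (z : T) := if z == x then y else z.

Lemma collapse_neq z : collapse z != x.
Proof. by rewrite /collapse; case: ifPn => // _; case: bxy => xy _; rewrite eq_sym. Qed.

Lemma collapse_homo : {homo collapse : a b / le a b}.
Proof.
case: po => lr _ lt a b ab; rewrite /collapse.
case: bxy => _ [] [yx ydom]; case: eqP => [ax|/eqP ax]; case: eqP => [bx|/eqP bx];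
  rewrite ?lr //.
- by apply: (lt x) yx _; rewrite -ax.
- by apply: ydom; rewrite // -bx.
- by apply: ydom; rewrite // -ax.
- by apply: (lt x) _ yx; rewrite -bx.
Qed.

Lemma collapse_comparable : comparable_fun le collapse id.
Proof.
case: po => lr _ _; rewrite /collapse.
by case: bxy => _ [] [? _]; [left|right] => z; case: eqP => [->|].
Qed.

Lemma collapse_chain (c : chains P) :
  {in val c &, forall a b, le (collapse a) b || le b (collapse a)}.
Proof.
case: po => lr _ lt a b ac bc; rewrite /collapse.
case: eqP => [ax|_]; last exact: chain_comparable ac bc.
case: (eqVneq b x) => [->|bx]; first by case: bxy => _ [] [->]; rewrite ?orbT.
subst a; case/orP: (chain_comparable ac bc) => h; case: bxy => _ [] [yx ydom].
- by rewrite (lt _ _ _ yx h).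
- by rewrite (ydom _ h bx).
- by rewrite (ydom _ h bx) orbT.
- by rewrite (lt _ _ _ h yx) orbT.
Qed.

Definition to_punctured (z : T) : pcarrier punctured :=
  exist _ (collapse z) (collapse_neq z).

Lemma to_punctured_homo : {homo to_punctured : a b / le a b >-> @ple punctured a b}.
Proof. exact: collapse_homo. Qed.

Lemma val_punctured_homo :
  {homo (val : pcarrier punctured -> T) : a b / @ple punctured a b >-> le a b}.
Proof. by []. Qed.

Lemma val_puncturedK : cancel val to_punctured.
Proof. by case=> z zx; apply: val_inj; rewrite /= /collapse (negPf zx). Qed.

Lemma hcontractible_remove_beat : hcontractible le <-> hcontractible (@ple punctured).
Proof.
apply: (hcontractible_retract to_punctured_homo val_punctured_homo val_puncturedK).
by apply: homotopic_comparable collapse_comparable; [apply: collapse_homo|].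
Qed.

(* A chain and its collapse are both contained in their union, which is again *)
(* a chain: this is the fence between the identity of [X'] and the retraction. *)
Lemma chain_pred_widen_collapse (c : chains P) : chain_pred (val c :|: collapse @: val c).
Proof.
apply/chain_predP; split.
  by apply: contra (chain_neq0 c); rewrite -!subset0 => /(subset_trans (subsetUl _ _)).
move=> a b /setUP [ac|/imsetP [a' a'c ->]] /setUP [bc|/imsetP [b' b'c ->]].
- exact: chain_comparable ac bc.
- by rewrite orbC; apply: collapse_chain b'c ac.
- exact: collapse_chain a'c bc.
- by case/orP: (chain_comparable a'c b'c) => /collapse_homo ->; rewrite ?orbT.
Qed.

Definition widen_collapse (c : chains P) : chains P :=
  exist (@chain_pred P) _ (chain_pred_widen_collapse c).

Lemma hcontractible_sd_remove_beat :
  hcontractible (@ple (sd_poset P)) <-> hcontractible (@ple (sd_poset punctured)).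
Proof.
have homo_widen : {homo widen_collapse : c d / @ple (sd_poset P) c d}.
  by move=> c d cd; apply: setUSS => //; apply: imsetS.
apply: (hcontractible_retract (chain_map_homo to_punctured_homo)
  (chain_map_homo val_punctured_homo)).
  move=> d; apply: val_inj; rewrite /= -imset_comp (eq_imset _ val_puncturedK).
  exact: imset_id.
apply: homotopic_trans (_ : homotopic _ _ widen_collapse) _;
  apply: homotopic_comparable => //.
- by move=> c d cd; apply/imsetS/imsetS.
- by left=> c; rewrite /= -imset_comp subsetUr.
- by right=> c; apply: subsetUl.
Qed.

End RemoveBeatPoint.

(* An element of [[v, w)] with the largest down-set is dominated by [w]. *)
Lemma exists_beat_dominated_up (T : finType) (le : rel T) : partial_order le ->
  forall v w, v != w -> le v w ->
  (forall z, le z v || le v z -> le z w || le w z) -> exists a b, beat le a b.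
Proof.
case=> lr la lt v w vw lvw hz.
pose below_w u := le v u && le u w && (u != w).
have /(arg_maxnP (fun u => #|[set z | le z u]|)) : below_w v by rewrite /below_w lr lvw.
move=> [u /andP [/andP [vu uw] uw'] umax]; exists u, w; split=> //.
right; split=> // z uz zu.
have vz : le v z by apply: lt uz.
case/orP: (hz z (introT orP (or_intror vz))) => [zw|//].
case: (eqVneq z w) => [->|zw']; first exact: lr.
have /umax : below_w z by rewrite /below_w vz zw zw'.
rewrite /= leqNgt => /negP; case; apply/proper_card/properP; split.
  by apply/subsetP => t; rewrite !inE => /lt; apply.
exists z; rewrite !inE ?lr //; apply: contra zu => zu'.
by apply/eqP/la; rewrite zu' uz.
Qed.

Lemma exists_beat_dominated (T : finType) (le : rel T) : partial_order le ->
  forall v w, v != w -> le v w || le w v ->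
  (forall z, le z v || le v z -> le z w || le w z) -> exists a b, beat le a b.
Proof.
move=> po v w vw /orP [lvw|lwv] hz; first exact: exists_beat_dominated_up lvw hz.
have [|a [b /beat_flip hb]] :=
  exists_beat_dominated_up (partial_order_flip po) vw lwv; last by exists a, b.
by move=> z; rewrite orbC => /hz; rewrite orbC.
Qed.

Section BeatFreeSubdivision.
Variable P : fposet.
Hypothesis po : partial_order (@ple P).
Local Notation T := (pcarrier P).
Local Notation le := (@ple P).
Local Notation sdP := (sd_poset P).

Let le_refl : reflexive le. Proof. by case: po. Qed.

Definition maximal_chain (F : chains P) :=
  [forall d : chains P, (val F \subset val d) ==> (val d \subset val F)].

Lemma maximal_chainP (F : chains P) :
  maximal_chain F -> forall d : chains P, val F \subset val d -> d = F.
Proof.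
move=> /forallP mF d Fd; apply/val_inj/eqP.
by rewrite eqEsubset Fd andbT; apply: (implyP (mF d)).
Qed.

Lemma exists_maximal_chain (c : chains P) :
  exists2 F, maximal_chain F & val c \subset val F.
Proof.
have [F cF Fmax] := @arg_maxnP _ c (fun d => val c \subset val d)
  (fun d => #|val d|) (subxx _).
exists F => //; apply/forallP => d; apply/implyP => Fd.
have /eqP <- : val F == val d by rewrite eqEcard Fd; apply: Fmax; apply: subset_trans cF Fd.
exact: subxx.
Qed.

Definition chain_cl (c : chains P) : {set T} :=
  \bigcap_(F | maximal_chain F && (val c \subset val F)) val F.

Lemma chain_cl_sup (c : chains P) : val c \subset chain_cl c.
Proof. by apply/bigcapsP => F /andP []. Qed.

Lemma chain_cl_sub (c F : chains P) :
  maximal_chain F -> val c \subset val F -> chain_cl c \subset val F.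
Proof. by move=> mF cF; apply: bigcap_inf; rewrite mF cF. Qed.

Lemma chain_pred_cl (c : chains P) : chain_pred (chain_cl c).
Proof.
have [F mF /(chain_cl_sub mF) clF] := exists_maximal_chain c.
apply/chain_predP; split.
  by apply: contra (chain_neq0 c); rewrite -!subset0; apply: subset_trans (chain_cl_sup c).
by move=> a b /(subsetP clF) aF /(subsetP clF) bF; apply: chain_comparable aF bF.
Qed.

Definition cl_chain (c : chains P) : chains P := exist (@chain_pred P) _ (chain_pred_cl c).

Lemma cl_chain_homo : {homo cl_chain : c d / @ple sdP c d}.
Proof.
move=> c d cd; apply/bigcapsP => F /andP [mF dF].
exact/(chain_cl_sub mF)/(subset_trans cd dF).
Qed.

Lemma cl_chainK (c : chains P) : cl_chain (cl_chain c) = cl_chain c.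
Proof.
apply/val_inj/eqP; rewrite eqEsubset chain_cl_sup andbT.
by apply/bigcapsP => F /andP [mF cF]; apply/(chain_cl_sub mF)/(chain_cl_sub mF).
Qed.

Lemma cl_chain_maximal (F : chains P) : maximal_chain F -> cl_chain F = F.
Proof.
by move=> mF; apply/val_inj/eqP; rewrite eqEsubset chain_cl_sup chain_cl_sub.
Qed.

Definition closed_chains : fposet :=
  @FPoset {c : chains P | cl_chain c == c} (fun a b => @ple sdP (val a) (val b)).

Definition to_closed (c : chains P) : pcarrier closed_chains :=
  exist _ (cl_chain c) (introT eqP (cl_chainK c)).

Lemma partial_order_closed_chains : partial_order (@ple closed_chains).
Proof.
have [lr la lt] := partial_order_sd P.
by split=> [a|a b /la/val_inj|a b c] //=; apply: lt.
Qed.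

Lemma hcontractible_closed_chains :
  hcontractible (@ple sdP) <-> hcontractible (@ple closed_chains).
Proof.
have i_homo : {homo (val : pcarrier closed_chains -> chains P) :
  a b / @ple closed_chains a b >-> @ple sdP a b} by [].
have r_homo : {homo to_closed : c d / @ple sdP c d >-> @ple closed_chains c d}.
  exact: cl_chain_homo.
apply: (hcontractible_retract r_homo i_homo).
  by move=> s; apply/val_inj/eqP/(valP s).
apply: homotopic_comparable cl_chain_homo _ _ => //.
by right=> c; apply: chain_cl_sup.
Qed.

Hypothesis bf : beat_free le.

(* A point [w <> v] lying on every maximal chain through [v] would be comparable *)
(* with everything comparable with [v], producing a beat point.               *)
Lemma cl_chain1 (v : T) : cl_chain (chain1 le_refl v) = chain1 le_refl v.
Proof.
apply/val_inj/eqP; rewrite eqEsubset chain_cl_sup andbT.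
apply/subsetP => w wc; rewrite inE; apply/negPn/negP => wv.
have inF F : maximal_chain F -> v \in val F -> w \in val F.
  by move=> mF vF; apply: (subsetP (chain_cl_sub mF _)) wc; rewrite sub1set.
have comparable_w (d : chains P) : v \in val d -> forall z, z \in val d -> le z w || le w z.
  move=> vd z zd; have [F mF /subsetP dF] := exists_maximal_chain d.
  exact: chain_comparable (dF _ zd) (inF _ mF (dF _ vd)).
have [a [b]] : exists a b, beat le a b.
  apply: (exists_beat_dominated po (v := v) (w := w)); first by rewrite eq_sym.
    by apply: (comparable_w (chain1 le_refl v)); rewrite inE.
  move=> z vz; pose dz := [set v; z].
  have cz : chain_pred dz.
    apply/chain_predP; split; first by apply/set0Pn; exists v; rewrite !inE eqxx.
    by move=> p q /set2P [] -> /set2P [] ->; rewrite ?le_refl // orbC.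
  by apply: (comparable_w (exist _ dz cz)); rewrite !inE eqxx ?orbT.
exact: bf.
Qed.

Definition closed1 (v : T) : pcarrier closed_chains :=
  exist _ (chain1 le_refl v) (introT eqP (cl_chain1 v)).

(* The closed singletons of the points of [s] lie below [s], hence below [n]. *)
Lemma closed_chains_no_down_beat (s n : pcarrier closed_chains) :
  n != s -> @ple closed_chains n s ->
  (forall t, @ple closed_chains t s -> t != s -> @ple closed_chains t n) -> False.
Proof.
move=> ns /= sub_ns dom; apply: (negP ns); apply/eqP/val_inj/val_inj/eqP.
rewrite eqEsubset sub_ns /=; apply/subsetP => v vs.
have [vs1|/dom] := eqVneq (closed1 v) s; last by rewrite /= !sub1set; apply.
have /set0Pn [u un] := chain_neq0 (val n).
have := subsetP sub_ns _ un; rewrite -vs1 => /set1P uv.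
by rewrite -uv.
Qed.

(* The maximal chains containing [s] are closed and above [s], hence above [n]. *)
Lemma closed_chains_no_up_beat (s n : pcarrier closed_chains) :
  n != s -> @ple closed_chains s n ->
  (forall t, @ple closed_chains s t -> t != s -> @ple closed_chains n t) -> False.
Proof.
move=> ns /= sub_sn dom; apply: (negP ns); apply/eqP/val_inj/val_inj/eqP.
rewrite eqEsubset sub_sn andbT -(eqP (valP s)); apply/bigcapsP => F /andP [mF sF].
have [Fs|Fs] := eqVneq F (val s).
  have : val n = F by apply: (maximal_chainP mF); rewrite Fs.
  by rewrite Fs => /val_inj nsE; rewrite nsE eqxx in ns.
by apply: (dom (exist _ F (introT eqP (cl_chain_maximal mF)))); rewrite -?(inj_eq val_inj).
Qed.

Lemma beat_free_closed_chains : beat_free (@ple closed_chains).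
Proof.
move=> s n [sn [[ns dom]|[sn' dom]]].
  by apply: (closed_chains_no_down_beat _ ns dom); rewrite eq_sym.
by apply: (closed_chains_no_up_beat _ sn' dom); rewrite eq_sym.
Qed.

Lemma hcontractible_sd_beat_free : hcontractible (@ple sdP) <-> hcontractible le.
Proof.
rewrite hcontractible_closed_chains.
rewrite (hcontractible_beat_freeP partial_order_closed_chains beat_free_closed_chains).
rewrite (hcontractible_beat_freeP po bf); split=> [[p all_p]|[p all_p]].
- have /set0Pn [v _] := chain_neq0 (val p); exists v => w.
  have wv : closed1 w = closed1 v by rewrite (all_p (closed1 w)) (all_p (closed1 v)).
  by have /setP /(_ w) := congr1 (fun s => val (val s)) wv; rewrite !inE eqxx => /esym/eqP.
- exists (closed1 p) => s; apply/val_inj/val_inj/eqP; rewrite eqEsubset.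
  apply/andP; split; first by apply/subsetP => u _; rewrite inE (all_p u).
  by have /set0Pn [u us] := chain_neq0 (val s); rewrite sub1set -(all_p u).
Qed.

End BeatFreeSubdivision.

Theorem hcontractible_sd (P : fposet) : partial_order (@ple P) ->
  hcontractible (@ple (sd_poset P)) <-> hcontractible (@ple P).
Proof.
move: {2}#|pcarrier P| (leqnn #|pcarrier P|) => n; elim: n P => [|n IH] P cardP po.
  apply: hcontractible_sd_beat_free => // x.
  by move: cardP; rewrite leqn0 => /eqP/card0_eq/(_ x); rewrite inE.
have [[x [y bxy]]|nobeat] := classic (exists x y, beat (@ple P) x y); last first.
  by apply: hcontractible_sd_beat_free => // x y bxy; apply: nobeat; exists x, y.
rewrite (hcontractible_sd_remove_beat po bxy) (hcontractible_remove_beat po bxy).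
apply: IH (partial_order_punctured x po).
by rewrite -ltnS; apply: leq_trans cardP; apply: card_punctured.
Qed.

(** * Orbit posets *)

Section OrbitPoset.
Variables (gT : finGroupType) (Y : gposet gT).
Local Notation T := (pcarrier Y).
Local Notation le := (@ple Y).
Local Notation act := (@Defs.gact gT Y).
Local Notation ole := (@ple (orbit_poset Y)).
Local Open Scope group_scope.

Lemma mem_orbitG (x : T) g : act x g \in orbitG x.
Proof. exact: imset_f. Qed.

Lemma orbitsP (A : orbits Y) : exists x, val A = orbitG x.
Proof. by case/existsP: (valP A) => x /eqP ->; exists x. Qed.

Lemma is_orbit_orbitG (x : T) : is_orbit (orbitG x).
Proof. by apply/existsP; exists x. Qed.

Definition orbit_of (x : T) : orbits Y := exist (@is_orbit gT Y) _ (is_orbit_orbitG x).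

Hypotheses (act1 : forall x, act x 1 = x)
  (actM : forall x g h, act x (g * h) = act (act x g) h).

Lemma actK (x : T) g : act (act x g) g^-1 = x.
Proof. by rewrite -actM mulgV act1. Qed.

Lemma act_inj g : injective (act^~ g).
Proof. by move=> a b /(congr1 (act^~ g^-1)); rewrite /= !actK. Qed.

Lemma orbitG_refl (x : T) : x \in orbitG x.
Proof. by rewrite -{1}(act1 x) mem_orbitG. Qed.

Lemma orbitG_eq (x y : T) : y \in orbitG x -> orbitG y = orbitG x.
Proof.
case/imsetP => g _ ->; apply/setP => z; apply/imsetP/imsetP => -[h _ ->].
  by exists (g * h); rewrite ?inE // actM.
by exists (g^-1 * h); rewrite ?inE // actM actK.
Qed.

Lemma orbit_ofE (A : orbits Y) x : x \in val A -> A = orbit_of x.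
Proof.
case: (orbitsP A) => y e xA; apply: val_inj; rewrite /= e.
by apply/esym/orbitG_eq; rewrite -e.
Qed.

Lemma orbit_ofP (A : orbits Y) : exists x, A = orbit_of x.
Proof. by have [x e] := orbitsP A; exists x; apply: val_inj. Qed.

Lemma orbit_of_act (x : T) g : orbit_of (act x g) = orbit_of x.
Proof. by apply/val_inj/orbitG_eq/mem_orbitG. Qed.

Lemma orbit_leP (A B : orbits Y) :
  reflect (exists y z, [/\ y \in val A, z \in val B & le y z]) (ole A B).
Proof.
apply: (iffP existsP) => [[y /andP [yA /existsP [z /andP [zB yz]]]]|[y [z [yA zB yz]]]].
  by exists y, z.
by exists y; rewrite yA; apply/existsP; exists z; rewrite zB.
Qed.

Lemma orbit_le_lift (x : T) (B : orbits Y) :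
  ole (orbit_of x) B -> exists2 z, z \in val B & le x z.
Proof.
case/orbit_leP => _ [z [/imsetP [g _ ->] zB yz]]; exists (act z g^-1).
  by rewrite (orbit_ofE zB) mem_orbitG.
by rewrite -(actK x g); apply: gact_mono.
Qed.

Hypothesis po : partial_order le.

(* [a <= a g <= a g^2 <= ...] returns to [a] after [#[g]] steps. *)
Lemma act_le_fixed (a : T) g : le a (act a g) -> act a g = a.
Proof.
case: po => lr la lt ag; have le_pow k : le a (act a (g ^+ k)).
  elim: k => [|k IH]; first by rewrite expg0 act1 lr.
  by apply: lt ag _; rewrite expgSr actM; apply: gact_mono.
have := gact_mono g (le_pow #[g].-1).
rewrite -actM -expgSr prednK ?order_gt0 // expg_order act1 => ga.
by apply: la; rewrite ag ga.
Qed.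

Lemma act_comparable_fixed (a : T) g : le a (act a g) || le (act a g) a -> act a g = a.
Proof.
case/orP=> [/act_le_fixed //|ga].
by have := @act_le_fixed (act a g) g^-1; rewrite actK => /(_ ga).
Qed.

Lemma orbit_of_homo : {homo orbit_of : x y / le x y >-> ole x y}.
Proof. by move=> x y xy; apply/orbit_leP; exists x, y; rewrite !orbitG_refl. Qed.

Lemma partial_order_orbit : partial_order ole.
Proof.
case: (po) => lr la lt; split.
- by move=> A; have [x ->] := orbit_ofP A; apply: orbit_of_homo (lr x).
- move=> A B; have [x ->] := orbit_ofP A; case/andP=> /orbit_le_lift [z zB xz].
  rewrite (orbit_ofE zB) => /orbit_le_lift [_ /imsetP [g _ ->] zxg].
  have xg : act x g = x by apply: act_le_fixed; apply: lt xz zxg.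
  rewrite xg in zxg; suff -> : z = x by [].
  by apply: la; rewrite zxg xz.
- move=> B A C; have [x ->] := orbit_ofP A; move=> /orbit_le_lift [z zB xz].
  rewrite (orbit_ofE zB) => /orbit_le_lift [w wC zw].
  by apply/orbit_leP; exists x, w; rewrite orbitG_refl wC (lt _ _ _ xz zw).
Qed.

End OrbitPoset.

Lemma nested_subset_max (I T : finType) (A : I -> {set T}) (i0 : I) :
    (forall i j, (A i \subset A j) || (A j \subset A i)) ->
    (forall i, #|A i| <= #|A i0|) ->
  forall i, A i \subset A i0.
Proof.
move=> nested maxA i; case/orP: (nested i i0) => // sub.
by have /eqP -> : A i0 == A i by rewrite eqEcard sub maxA.
Qed.

Section SubdivisionAction.
Variables (gT : finGroupType) (Y : gposet gT).
Local Notation le := (@ple Y).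
Local Notation act := (@Defs.gact gT Y).
Local Notation sact := (@Defs.gact gT (sd Y)).
Local Open Scope group_scope.
Hypotheses (po : partial_order le) (act1 : forall x, act x 1 = x)
  (actM : forall x g h, act x (g * h) = act (act x g) h).

Lemma sd_act1 (c : chains Y) : sact c 1 = c.
Proof. by apply: val_inj; rewrite /= (eq_imset _ act1) imset_id. Qed.

Lemma sd_actM (c : chains Y) g h : sact c (g * h) = sact (sact c g) h.
Proof. by apply: val_inj; rewrite /= -imset_comp; apply: eq_imset => x /=; apply: actM. Qed.

Lemma card_sd_act (c : chains Y) g : #|val (sact c g)| = #|val c|.
Proof. exact/card_imset/act_inj. Qed.

(* Translating the largest chain by its own [g] works for all the others, since *)
(* two translates of a point lying in a common chain coincide.               *)
Lemma propB_sd : propB (sd Y).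
Proof.
move=> [|k] v gs v_nested w_nested; first by exists 1 => -[].
have [i0 _ i0max] := @arg_maxnP _ ord0 predT (fun i => #|val (v i)|) isT.
have v_sub := nested_subset_max v_nested (fun i => i0max i isT).
have w_sub : forall i, val (sact (v i) (gs i)) \subset val (sact (v i0) (gs i0)).
  by apply: nested_subset_max w_nested _ => i; rewrite !card_sd_act; apply: i0max.
exists (gs i0) => i; apply: val_inj; apply: eq_in_imset => x xv.
have x_i0 : x \in val (v i0) by apply: subsetP (v_sub i) _ xv.
have /(subsetP (w_sub i)) xgi : act x (gs i) \in val (sact (v i) (gs i)) by apply: imset_f.
have xgi0 : act x (gs i0) \in val (sact (v i0) (gs i0)) by apply: imset_f.
have := chain_comparable xgi xgi0.
have -> : act x (gs i0) = act (act x (gs i)) ((gs i)^-1 * gs i0).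
  by rewrite -actM mulgA mulgV mul1g.
by move/(act_comparable_fixed act1 actM po) ->.
Qed.

End SubdivisionAction.

Section OrbitSubdivision.
Variables (gT : finGroupType) (Y : gposet gT).
Local Notation le := (@ple Y).
Local Notation act := (@Defs.gact gT Y).
Local Notation sact := (@Defs.gact gT (sd Y)).
Local Notation OY := (orbit_poset Y).
Local Notation OsdY := (orbit_poset (sd Y)).
Local Open Scope group_scope.
Hypotheses (po : partial_order le) (act1 : forall x, act x 1 = x)
  (actM : forall x g h, act x (g * h) = act (act x g) h).

Let sact1 := sd_act1 act1.
Let sactM := sd_actM actM.

Definition orbit_chain (c : chains Y) : chains OY :=
  chain_map (orbit_of_homo act1) c.

Lemma orbit_chain_act (c : chains Y) g : orbit_chain (sact c g) = orbit_chain c.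
Proof.
apply: val_inj; rewrite /= -imset_comp; apply: eq_imset => x /=.
exact: orbit_of_act act1 actM x g.
Qed.

Definition orbit_rep (A : orbits (sd Y)) : chains Y := xchoose (existsP (valP A)).

Lemma orbit_rep_mem (A : orbits (sd Y)) : orbit_rep A \in val A.
Proof. by rewrite (eqP (xchooseP (existsP (valP A)))) (@orbitG_refl _ (sd Y) sact1). Qed.

Definition chain_of_orbit (A : orbits (sd Y)) : chains OY := orbit_chain (orbit_rep A).

Lemma chain_of_orbitE (A : orbits (sd Y)) c :
  c \in val A -> chain_of_orbit A = orbit_chain c.
Proof.
move=> cA; rewrite /chain_of_orbit; move: (orbit_rep A) (orbit_rep_mem A) => r.
rewrite (@orbit_ofE _ (sd Y) sact1 sactM _ _ cA) => /imsetP [g _ ->].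
exact: orbit_chain_act.
Qed.

Lemma chain_of_orbit_homo :
  {homo chain_of_orbit : A B / @ple OsdY A B >-> @ple (sd_poset OY) A B}.
Proof.
move=> A B /orbit_leP [c [d [cA dB cd]]].
by rewrite (chain_of_orbitE cA) (chain_of_orbitE dB); apply: imsetS.
Qed.

Lemma orbit_chain_extend (c : chains Y) (o : orbits Y) :
    {in val c, forall x, @ple OY (orbit_of x) o} ->
  exists d : chains Y, val (orbit_chain d) = o |: val (orbit_chain c).
Proof.
case: (po) => lr _ lt below_o; have [m mc mmax] := chain_pred_max po (valP c).
have [z zo mz] := orbit_le_lift act1 actM (below_o m mc).
have le_z a : a \in val c -> le a z by move=> ac; apply: lt (mmax a ac) mz.
have dz : chain_pred (z |: val c).
  apply/chain_predP; split; first by apply/set0Pn; exists z; rewrite setU11.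
  move=> a b /setU1P [->|ac] /setU1P [->|bc]; rewrite ?lr ?le_z ?orbT //.
  exact: chain_comparable ac bc.
exists (exist (@chain_pred Y) _ dz); rewrite /= imsetU1.
by rewrite -(orbit_ofE act1 actM zo).
Qed.

Lemma orbit_chain_surj (s : chains OY) : exists c : chains Y, orbit_chain c == s.
Proof.
suff lift n (t : {set pcarrier OY}) : #|t| <= n -> chain_pred t ->
    exists c, val (orbit_chain c) = t.
  by have [c cs] := lift _ (val s) (leqnn _) (valP s); exists c; apply/eqP/val_inj.
elim: n t => [|n IH] t tn tc; have /chain_predP [t0 tcmp] := tc.
  by move: t0; rewrite -card_gt0 ltnNge tn.
have [om omt ommax] := chain_pred_max (partial_order_orbit act1 actM po) tc.
have [t'0|t'n0] := eqVneq (t :\ om) set0.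
  have [x ex] := orbitsP om; have [lr _ _] := po; exists (chain1 lr x).
  rewrite /= imset_set1 -(setD1K omt) t'0 setU0; congr [set _].
  by apply: val_inj; rewrite /= ex.
have [c ec] : exists c, val (orbit_chain c) = t :\ om.
  apply: IH.
    by rewrite -ltnS; apply: leq_trans tn; rewrite (cardsD1 om t) omt.
  apply/chain_predP; split=> // a b /setD1P [_ ta] /setD1P [_ tb].
  exact: tcmp ta tb.
have [d ed] : exists d, val (orbit_chain d) = om |: (t :\ om).
  rewrite -ec; apply: orbit_chain_extend => x xc; apply: ommax.
  by apply: (subsetP (subD1set t om)); rewrite -ec imset_f.
by exists d; rewrite ed setD1K.
Qed.

Hypothesis pB : propB Y.

Lemma orbit_chain_subset_act (c d : chains Y) :
  val (orbit_chain c) \subset val (orbit_chain d) -> exists g, val (sact c g) \subset val d.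
Proof.
move=> sub; pose v (i : 'I_#|val c|) := enum_val i.
have [gs vgs] : exists gs : 'I_#|val c| -> gT, forall i, act (v i) (gs i) \in val d.
  apply: (@fin_all_exists _ (fun=> gT) (fun i g => act (v i) g \in val d)) => i.
  have : orbit_of (v i) \in val (orbit_chain c) by apply/imset_f/enum_valP.
  move=> /(subsetP sub) /imsetP [y yd /(congr1 val) /= vy].
  have : y \in orbitG (v i) by rewrite vy (orbitG_refl act1).
  by case/imsetP => g _ yg; exists g; rewrite -yg.
have [g vg] := pB (v := v) (gs := gs)
  (fun i j => chain_comparable (enum_valP i) (enum_valP j))
  (fun i j => chain_comparable (vgs i) (vgs j)).
exists g; apply/subsetP => _ /imsetP [x xc ->].
by rewrite -(enum_rankK_in xc xc) -vg vgs.
Qed.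

Lemma chain_of_orbit_reflect (A B : orbits (sd Y)) :
  @ple (sd_poset OY) (chain_of_orbit A) (chain_of_orbit B) -> @ple OsdY A B.
Proof.
move=> /orbit_chain_subset_act [g cgd]; apply/orbit_leP.
exists (sact (orbit_rep A) g), (orbit_rep B); split=> //; last exact: orbit_rep_mem.
move: (orbit_rep A) (orbit_rep_mem A) => c cA.
by rewrite (@orbit_ofE _ (sd Y) sact1 sactM _ _ cA) (@mem_orbitG _ (sd Y)).
Qed.

Definition lift_orbit_chain (s : chains OY) : orbits (sd Y) :=
  @orbit_of _ (sd Y) (xchoose (orbit_chain_surj s)).

Lemma lift_orbit_chainK : cancel lift_orbit_chain chain_of_orbit.
Proof.
move=> s; rewrite /lift_orbit_chain (chain_of_orbitE (c := xchoose (orbit_chain_surj s))).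
  exact/eqP/(xchooseP (orbit_chain_surj s)).
exact: (@orbitG_refl _ (sd Y) sact1).
Qed.

Lemma hcontractible_orbit_sd :
  hcontractible (@ple OsdY) <-> hcontractible (@ple (sd_poset OY)).
Proof.
have lift_homo : {homo lift_orbit_chain : s t / @ple (sd_poset OY) s t >-> @ple OsdY s t}.
  by move=> s t st; apply: chain_of_orbit_reflect; rewrite !lift_orbit_chainK.
apply: (hcontractible_retract chain_of_orbit_homo lift_homo lift_orbit_chainK).
apply: homotopic_id => A /=.
have [_ la _] := @partial_order_orbit _ (sd Y) sact1 sactM (partial_order_sd Y).
by apply: la; rewrite !chain_of_orbit_reflect // lift_orbit_chainK /=.
Qed.

End OrbitSubdivision.

Definition gposet_laws (gT : finGroupType) (Y : gposet gT) :=
  [/\ partial_order (@ple Y), forall x : pcarrier Y, Defs.gact x 1%g = x &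
      forall (x : pcarrier Y) g h, Defs.gact x (g * h)%g = Defs.gact (Defs.gact x g) h].

Lemma gposet_laws_sdn (gT : finGroupType) (Y : gposet gT) n :
  gposet_laws Y -> gposet_laws (sdn n Y).
Proof.
move=> lawsY; elim: n => [|n [po act1 actM]] //=.
by split; [apply: partial_order_sd|apply: sd_act1|apply: sd_actM].
Qed.

Lemma contractible_orbitP (gT : finGroupType) (Y : gposet gT) : gposet_laws Y ->
  contractible (orbit_poset Y) <-> hcontractible (@ple (orbit_poset Y)).
Proof.
by case=> po act1 actM; have [lr _ lt] := partial_order_orbit act1 actM po;
  apply: FiniteSpace.contractibleP.
Qed.

Lemma hcontractible_orbit_sd_propB (gT : finGroupType) (Y : gposet gT) :
  gposet_laws Y -> propB Y ->
  hcontractible (@ple (orbit_poset (sd Y))) <-> hcontractible (@ple (orbit_poset Y)).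
Proof.
case=> po act1 actM pB; rewrite (hcontractible_orbit_sd po act1 actM pB).
exact/hcontractible_sd/partial_order_orbit.
Qed.

Lemma hcontractible_orbit_sdn (gT : finGroupType) (X : gposet gT) n :
  gposet_laws X -> 0 < n ->
  hcontractible (@ple (orbit_poset (sdn n X))) <->
  hcontractible (@ple (orbit_poset (sd X))).
Proof.
move=> lawsX; elim: n => [//|[//|n] IH _]; rewrite -IH //=.
have [po act1 actM] := gposet_laws_sdn n lawsX.
apply: (hcontractible_orbit_sd_propB (gposet_laws_sdn n.+1 lawsX)).
exact: propB_sd.
Qed.

Theorem corollary2p11 (gT : finGroupType) (T : finType) (le : rel T)
  (act : T -> gT -> T)
  (le_refl : reflexive le) (le_anti : antisymmetric le) (le_trans : transitive le)
  (act1 : forall x, act x 1%g = x)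
  (actM : forall x g h, act x (g * h)%g = act (act x g) h)
  (act_mono : forall x y g, le x y -> le (act x g) (act y g)) :
  let X : gposet gT := @GPoset gT (@FPoset T le) act act_mono in
  (forall n : nat, 1 <= n ->
     (contractible (orbit_poset (sdn n X)) <-> contractible (orbit_poset (sd X))))
  /\
  (propB X -> forall n : nat, 1 <= n ->
     (contractible (orbit_poset (sdn n X)) <-> contractible (orbit_poset X))).
Proof.
move=> X; have lawsX : gposet_laws X by split.
have contrP n := contractible_orbitP (gposet_laws_sdn n lawsX).
split=> [n n_gt0|pB n n_gt0]; rewrite (contrP n).
  by rewrite (contrP 1) hcontractible_orbit_sdn.
by rewrite (contrP 0) hcontractible_orbit_sdn // hcontractible_orbit_sd_propB.
Qed.
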